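(* Let $(\rho,\mu,\nu)$ be a regular triple of standard representations of $\mathcal{W}_N$ and $R=R(\rho,\mu,\nu)$. Then, as $N^2\times N^2$ matrices, with $Z_1=Z\otimes\mathrm{id}$, $Z_2=\mathrm{id}\otimes Z$, $Y_1=Y\otimes\mathrm{id}$, $Y_2=\mathrm{id}\otimes Y$: $$(C_1)\ R\,Z_1Y_2=Z_1Y_2\,R,\qquad (C_2)\ R\,Y_1=Y_1Y_2\,R,\qquad (C_3)\ R\,Z_1Z_2=Z_2\,R.$$
   Context: $N\ge3$ odd, $N=2P+1$, $\omega=e^{2\pi i/N}$; for integers $r$, $\omega^{r/2}:=(\omega^{P+1})^r$. Indices run over $\mathbb{Z}/N$; $\delta(n)=1$ if $n\equiv0\pmod N$, else $0$. $X_{ij}=\delta(i-j-1)$, $Z_{ij}=\omega^i\delta(i-j)$, $Y=\omega^{1/2}XZ$, i.e. $Y_{ij}=\omega^{1/2+j}\delta(i-j-1)$. $\mathcal{W}_N$: unital $\mathbb{C}$-algebra generated by $E,E^{-1},D$ with $EE^{-1}=E^{-1}E=1$, $ED=\omega DE$, $\Delta(E)=E\otimes E$, $\Delta(D)=E\otimes D+D\otimes1$; tensor products via $\Delta$; cyclic = $E,D$ act invertibly; regular = every tensor product of consecutive terms cyclic. Standard representation with parameters $(a_\rho,y_\rho)\in(\mathbb{C}^* )^2$: $\rho(E)=a_\rho^2Z$, $\rho(D)=a_\rho y_\rho X$. A determination $u\mapsto u^{1/N}$ of the $N$-th root is fixed; $\rho\mu$ has $a_{\rho\mu}=a_\rho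 a_\mu$, $y_{\rho\mu}=(a_\rho^Ny_\mu^N+y_\rho^Na_\mu^{-N})^{1/N}$; products are associative. Standing convention: $-\frac{y_\rho y_\nu}{y_{\rho\mu\nu}y_\mu}=r\big(\frac{y_{\rho\mu}y_{\mu\nu}}{y_{\rho\mu\nu}y_\mu}\big)$. Functions: for $x^N+y^N=z^N$, $\omega(x,y,z|n)=\prod_{j=1}^n\frac{y}{z-x\omega^j}$ ($0\le n\le N-1$), extended $N$-periodically; $\omega(x,y,z|m,n)=\omega(x,y,z|m-n)\omega^{n^2/2}$. $g(x)=\prod_{j=1}^{N-1}(1-x\omega^j)^{j/N}$, $r(x)=(1-x^N)^{1/N}$ (analytic continuations from $0$ to $\mathbb{C}\setminus\{|x|\ge1,\arg x\in\theta+\frac{2\pi}{N}\mathbb{Z}\}$, $\theta$ fixed so $g$ avoids the cuts); $h(x)=x^{-P}g(x)/g(1)$. $6j$-symbol: $R(\rho,\mu,\nu)^{\gamma,\delta}_{\alpha,\beta}=h\big(\frac{y_{\rho\mu}y_{\mu\nu}}{y_{\rho\mu\nu}y_\mu}\big)\omega^{\alpha\delta}\omega(y_{\rho\mu\nu}y_\mu,y_\rho y_\nu,y_{\rho\mu}y_{\mu\nu}|\gamma,\alpha)\delta(\gamma+\delta-\beta)$. Matrix convention: an array $M^{\gamma,\delta}_{\alpha,\beta}$ is the $N^2\times N^2$ matrix with entry $M^{\gamma,\delta}_{\alpha,\beta}$ in row $(\alpha,\beta)$, column $(\gamma,\delta)$; $A\otimes B$ has entry $A_{\alpha\gamma}B_{\beta\delta}$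 there; products are matrix products. *)

From HB Require Import structures.
From mathcomp Require Import all_boot all_order all_algebra.
From mathcomp Require Import reals sequences exp trigo.
From mathcomp Require Import complex mxtens.

Set Implicit Arguments.
Unset Strict Implicit.
Unset Printing Implicit Defensive.
Import Order.TTheory GRing.Theory Num.Theory.
Local Open Scope ring_scope.
Local Open Scope complex_scope.

Section W6j.
Variable R : realType.
Local Notation C := R[i].
Variable N : nat.

Definition omega : C := (cos (2 * pi / N%:R)) +i* (sin (2 * pi / N%:R)).

(* P with N = 2P+1 *)
Definition Phalf : nat := N./2.

(* omega^{r/2} := (omega^{P+1})^r, r an integer *)
Definition omega_half (r : int) : C := (omega ^+ Phalf.+1) ^ r.

Definition deltaN (n : int) : C := if (n %% N%:Z)%Z == 0 then 1 else 0.

(* the N x N matrices X, Z, Y (indices 0..N-1 representing Z/N) *)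
Definition Xmat : 'M[C]_N := \matrix_(i, j) deltaN (i%:Z - j%:Z - 1).
Definition Zmat : 'M[C]_N := \matrix_(i, j) (omega ^+ i * deltaN (i%:Z - j%:Z)).
Definition Ymat : 'M[C]_N :=
  \matrix_(i, j) (omega_half 1 * omega ^+ j * deltaN (i%:Z - j%:Z - 1)).

(* A representation of W_N on C^n, given by the images (rho(E), rho(D)). *)
Definition rep (n : nat) := ('M[C]_n * 'M[C]_n)%type.

Definition std_rep (a y : C) : rep N := (a ^+ 2 *: Zmat, (a * y) *: Xmat).

(* tensor product via the coproduct Delta(E) = E (x) E, Delta(D) = E (x) D + D (x) 1 *)
Definition tens_rep m n (r1 : rep m) (r2 : rep n) : rep (m * n) :=
  (r1.1 *t r2.1, r1.1 *t r2.2 + r1.2 *t (1%:M : 'M[C]_n)).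

Definition cyclic_rep n (r : rep n) : Prop := r.1 \in unitmx /\ r.2 \in unitmx.

Definition regular_triple (ar yr am ym an yn : C) : Prop :=
  let rho := std_rep ar yr in let mu := std_rep am ym in let nu := std_rep an yn in
  cyclic_rep rho /\ cyclic_rep mu /\ cyclic_rep nu /\
  cyclic_rep (tens_rep rho mu) /\ cyclic_rep (tens_rep mu nu) /\
  cyclic_rep (tens_rep (tens_rep rho mu) nu).

(* parameter y of the product rho mu, for a fixed determination nroot of u^{1/N} *)
Definition yprod (nroot : C -> C) (a1 y1 a2 y2 : C) : C :=
  nroot (a1 ^+ N * y2 ^+ N + y1 ^+ N * a2 ^- N).

Definition re_c (w : C) : R := let: a +i* _ := w in a.
Definition im_c (w : C) : R := let: _ +i* b := w in b.
Definition abs_c (w : C) : R := Num.sqrt (re_c w ^+ 2 + im_c w ^+ 2).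
Definition cexp (w : C) : C :=
  (expR (re_c w) * cos (im_c w)) +i* (expR (re_c w) * sin (im_c w)).
(* principal argument in (-pi, pi] *)
Definition Argc (w : C) : R :=
  if im_c w < 0 then - acos (re_c w / abs_c w) else acos (re_c w / abs_c w).
Definition Logc (w : C) : C := (ln (abs_c w)) +i* (Argc w).
(* principal power w^c (and 0^c := 0) *)
Definition cpow (w c : C) : C := if w == 0 then 0 else cexp (c * Logc w).

Definition r_fun (x : C) : C := cpow (1 - x ^+ N) (N%:R^-1).
Definition g_fun (x : C) : C :=
  \prod_(1 <= j < N) cpow (1 - x * omega ^+ j) (j%:R / N%:R).
Definition h_fun (x : C) : C := x ^- Phalf * g_fun x / g_fun 1.

Definition wfun (x y z : C) (n : int) : C :=
  \prod_(1 <= j < (absz (n %% N%:Z)%Z).+1) (y / (z - x * omega ^+ j)).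
Definition wfun2 (x y z : C) (m n : int) : C :=
  wfun x y z (m - n) * omega_half (n ^+ 2).

(* The 6j-symbol R(rho,mu,nu) as an N^2 x N^2 matrix: entry in row (alpha,beta),
   column (gamma,delta), pairs encoded by mxtens_index (same convention as *t). *)
Definition R6j (nroot : C -> C) (ar yr am ym an yn : C) : 'M[C]_(N * N) :=
  let yrm := yprod nroot ar yr am ym in
  let ymn := yprod nroot am ym an yn in
  let yrmn := yprod nroot (ar * am) yrm an yn in
  let X := yrmn * ym in let Y := yr * yn in let Z := yrm * ymn in
  \matrix_(i, j)
    (let ab := mxtens_unindex (m := N) (n := N) i in
     let cd := mxtens_unindex (m := N) (n := N) j in
     let al : int := ab.1 in let be : int := ab.2 in
     let ga : int := cd.1 in let de : int := cd.2 in
     h_fun (Z / X) * omega ^ (al * de) * wfun2 X Y Z ga al * deltaN (ga + de - be)).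

Definition standing_convention (nroot : C -> C) (ar yr am ym an yn : C) : Prop :=
  let yrm := yprod nroot ar yr am ym in
  let ymn := yprod nroot am ym an yn in
  let yrmn := yprod nroot (ar * am) yrm an yn in
  - (yr * yn) / (yrmn * ym) = r_fun (yrm * ymn / (yrmn * ym)).

End W6j.

(* Z, Y and the identity are weighted cyclic shifts [A a c = g a c * delta (a - c - s)]
   and R is supported on [gamma + delta = beta (mod N)].  Multiplying R on either
   side by a tensor product of weighted shifts thus only shifts the indices of R
   and multiplies its entries by powers of omega, and each relation reduces to a
   congruence modulo N between omega-exponents on the support of the delta.  Only
   the N-periodicity of the entries of R in each index is used, not the values of
   h, of omega(x, y, z | .) or of the parameters: regularity and the standing
   convention play no role.  For (C2), oddness of N enters through
   omega^(2 (P + 1)) = omega. *)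

From HB Require Import structures.
From mathcomp Require Import all_boot all_order all_algebra.
From mathcomp Require Import reals sequences exp trigo.
From mathcomp Require Import complex mxtens.
From mathcomp Require Import ring.
Import GRing.Theory Num.Theory.
Local Open Scope ring_scope.
Local Open Scope complex_scope.

Section Sixj.
Variable R : realType.
Variable N : nat.
Hypothesis N_gt0 : (0 < N)%N.
Local Notation C := R[i].
Local Notation om := (omega R N).
Local Notation dl := (deltaN R N).
Local Notation "x = y %[modN ]" := (N%:Z %| x - y)%Z (at level 70).

Lemma omegaX k :
  om ^+ k = cos (2 * pi / N%:R *+ k) +i* sin (2 * pi / N%:R *+ k).
Proof.
rewrite /omega; set t := 2 * pi / N%:R.
elim: k => [|k IH]; first by rewrite expr0 !mulr0n cos0 sin0.
by rewrite exprSr IH [t *+ k.+1]mulrSr cosD sinD /=; congr (_ +i* _); ring.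
Qed.

Lemma omega_exprN : om ^+ N = 1.
Proof.
rewrite omegaX (_ : 2 * pi / N%:R *+ N = pi *+ 2) ?cos2pi ?sin2pi //.
by rewrite -mulr_natr -mulrA mulVf ?pnatr_eq0 -?lt0n // mulr1 mulr_natl.
Qed.

Lemma omega_neq0 : om != 0.
Proof.
apply/eqP => om0; move: omega_exprN; rewrite om0 expr0n eqn0Ngt N_gt0 /=.
by move/eqP; rewrite eq_sym oner_eq0.
Qed.

Lemma omega_exprz_mod (x y : int) : x = y %[modN] -> om ^ x = om ^ y.
Proof.
case/dvdzP=> q Hq; have -> : x = y + q * N by rewrite -Hq; ring.
by rewrite expfzDr ?omega_neq0 // [q * _]mulrC -exprz_exp -exprnP omega_exprN exp1rz mulr1.
Qed.

Lemma deltaNE n : dl n = if (N%:Z %| n)%Z then 1 else 0.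
Proof. by rewrite /deltaN (_ : (_ == 0) = (N%:Z %| n)%Z) //; apply/eqP/dvdz_mod0P. Qed.

Lemma deltaN_mod x y : x = y %[modN] -> dl x = dl y.
Proof. by move=> Hxy; rewrite !deltaNE -[x](subrK y) (rpredDl _ Hxy). Qed.

Lemma deltaNN x : dl (- x) = dl x.
Proof. by rewrite !deltaNE rpredN. Qed.

Lemma ord_eq_mod (k k' : 'I_N) : k%:Z = k'%:Z %[modN] -> k = k'.
Proof.
rewrite -eqz_mod_dvd !modz_small ?lez_nat ?ltz_nat ?ltn_ord //.
by move/eqP=> [] /val_inj.
Qed.

Lemma wfun_mod (x y z : C) (m n : int) : m = n %[modN] -> wfun N x y z m = wfun N x y z n.
Proof. by rewrite -eqz_mod_dvd => /eqP Emn; rewrite /wfun Emn. Qed.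

Lemma omega_halfE (r : int) : omega_half R N r = om ^ ((Phalf N).+1%:Z * r).
Proof. by rewrite /omega_half -exprz_exp. Qed.

Definition periodic (F : int -> C) := forall x y, x = y %[modN] -> F x = F y.

Definition periodic2 (g : int -> int -> C) :=
  (forall c, periodic (g ^~ c)) /\ (forall a, periodic (g a)).

Definition periodic4 (F : int -> int -> int -> int -> C) :=
  [/\ forall b c d, periodic (fun a => F a b c d),
      forall a c d, periodic (fun b => F a b c d),
      forall a b d, periodic (fun c => F a b c d)
    & forall a b c, periodic (F a b c)].

Lemma sum_deltaN (F : int -> C) (c : int) : periodic F ->
  \sum_(k < N) F k * dl (k%:Z - c) = F c.
Proof.
move=> perF; have c_ge0 : 0 <= (c %% N)%Z by rewrite modz_ge0 // eqz_nat -lt0n.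
have c_ltN : (absz (c %% N)%Z < N)%N.
  by rewrite -ltz_nat gez0_abs // ltz_pmod // ltz_nat.
pose k0 : 'I_N := Ordinal c_ltN.
have k0_mod : k0%:Z = c %[modN] by rewrite /= gez0_abs // -eqz_mod_dvd modz_mod.
rewrite (bigD1 k0) //= big1 ?addr0; first by rewrite deltaNE k0_mod mulr1; exact: perF.
move=> k /negPf nk0; rewrite deltaNE; case: ifP => [kc|]; last by rewrite mulr0.
suff /ord_eq_mod/eqP : k%:Z = k0%:Z %[modN] by rewrite nk0.
by rewrite -(subrKA c) rpredD // -opprB rpredN.
Qed.

Lemma big_mxtens_index (F : 'I_(N * N) -> C) :
  \sum_i F i = \sum_(a < N) \sum_(b < N) F (mxtens_index (a, b)).
Proof.
rewrite pair_big /= (reindex (@mxtens_index N N)) /=; first by apply: eq_bigr => -[].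
by exists (@mxtens_unindex N N) => i _; rewrite (mxtens_indexK, mxtens_unindexK).
Qed.

Definition weighted_shift (A : 'M[C]_N) (g : int -> int -> C) (s : int) :=
  periodic2 g /\ forall a c : 'I_N, A a c = g a c * dl (a%:Z - c%:Z - s).

Definition tens_entries (M : 'M[C]_(N * N)) (F : int -> int -> int -> int -> C) :=
  forall a b c d : 'I_N, M (mxtens_index (a, b)) (mxtens_index (c, d)) = F a b c d.

Section WeightedShiftProducts.
Variables (M : 'M[C]_(N * N)) (F : int -> int -> int -> int -> C).
Variables (A B : 'M[C]_N) (gA gB : int -> int -> C) (sA sB : int).
Hypotheses (MF : tens_entries M F) (perF : periodic4 F).
Hypotheses (shA : weighted_shift A gA sA) (shB : weighted_shift B gB sB).

Lemma mulmx_tens_shift (a b c d : 'I_N) :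
  (M *m (A *t B)) (mxtens_index (a, b)) (mxtens_index (c, d)) =
    F a b (c%:Z + sA) (d%:Z + sB) * gA (c%:Z + sA) c * gB (d%:Z + sB) d.
Proof.
case: perF => _ _ perF3 perF4; case: shA => [[perA _] AE]; case: shB => [[perB _] BE].
rewrite mxE big_mxtens_index.
transitivity (\sum_(a' < N) (gA a' c * (F a b a' (d%:Z + sB) * gB (d%:Z + sB) d))
                 * dl (a'%:Z - (c%:Z + sA))).
  apply: eq_bigr => a' _.
  have := sum_deltaN (fun y => F a b a' y * gB y d) (d%:Z + sB); cbv beta => <-; last first.
    by move=> x y xy; rewrite (perF4 _ _ _ _ _ xy) (perB _ _ _ xy).
  rewrite mulr_sumr mulr_suml; apply: eq_bigr => b' _.
  by rewrite MF tensmxE AE BE !opprD !addrA; ring.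
rewrite (sum_deltaN (fun x => gA x c * (F a b x (d%:Z + sB) * gB (d%:Z + sB) d))).
  by rewrite /=; ring.
by move=> x y xy; rewrite (perA _ _ _ xy) (perF3 _ _ _ _ _ xy).
Qed.

Lemma mul_tens_shift_mx (a b c d : 'I_N) :
  ((A *t B) *m M) (mxtens_index (a, b)) (mxtens_index (c, d)) =
    gA a (a%:Z - sA) * gB b (b%:Z - sB) * F (a%:Z - sA) (b%:Z - sB) c d.
Proof.
case: perF => perF1 perF2 _ _; case: shA => [[_ perA] AE]; case: shB => [[_ perB] BE].
have deltaN_swap x y s : dl (x - y - s) = dl (y - (x - s)).
  by rewrite -deltaNN; congr dl; ring.
rewrite mxE big_mxtens_index.
transitivity (\sum_(a' < N) (gA a a' * (gB b (b%:Z - sB) * F a' (b%:Z - sB) c d))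
                 * dl (a'%:Z - (a%:Z - sA))).
  apply: eq_bigr => a' _.
  have := sum_deltaN (fun y => gB b y * F a' y c d) (b%:Z - sB); cbv beta => <-; last first.
    by move=> x y xy; rewrite (perF2 _ _ _ _ _ xy) (perB _ _ _ xy).
  rewrite mulr_sumr mulr_suml; apply: eq_bigr => b' _.
  by rewrite MF tensmxE AE BE !deltaN_swap; ring.
rewrite (sum_deltaN (fun x => gA a x * (gB b (b%:Z - sB) * F x (b%:Z - sB) c d))).
  by rewrite /=; ring.
by move=> x y xy; rewrite (perA _ _ _ xy) (perF1 _ _ _ _ _ xy).
Qed.

End WeightedShiftProducts.

Lemma tens_matrixP (M1 M2 : 'M[C]_(N * N)) :
  (forall a b c d : 'I_N, M1 (mxtens_index (a, b)) (mxtens_index (c, d)) =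
                          M2 (mxtens_index (a, b)) (mxtens_index (c, d))) ->
  M1 = M2.
Proof.
move=> E; apply/matrixP => i j.
by case: (mxtens_indexP i) => a b; case: (mxtens_indexP j) => c d; exact: E.
Qed.

Arguments mulmx_tens_shift {M F A B gA gB sA sB}.
Arguments mul_tens_shift_mx {M F A B gA gB sA sB}.

Lemma Zmat_shift : weighted_shift (Zmat R N) (fun a _ => om ^ a) 0.
Proof. by split=> [|a c]; [split=> // c; exact: omega_exprz_mod | rewrite mxE subr0]. Qed.

Lemma Ymat_shift : weighted_shift (Ymat R N) (fun _ c => omega_half R N 1 * om ^ c) 1.
Proof.
split=> [|a c]; last by rewrite mxE.
by split=> // a x y xy; rewrite (omega_exprz_mod _ _ xy).
Qed.

Lemma scalar1_shift : weighted_shift 1%:M (fun _ _ => 1) 0.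
Proof.
split=> // a c; rewrite mxE subr0 mul1r deltaNE.
have [->|ne] := eqVneq a c; first by rewrite subrr dvdz0.
by case: ifP => // /ord_eq_mod ac; rewrite ac eqxx in ne.
Qed.

(* The entries of R(rho, mu, nu), with h(...) and the arguments x, y, z of
   omega(x, y, z | gamma, alpha) left as free constants. *)
Definition sixj_entry (hh X Y Z : C) (al be ga de : int) : C :=
  hh * om ^ (al * de) * wfun2 N X Y Z ga al * dl (ga + de - be).

Definition sixj_mx (hh X Y Z : C) : 'M[C]_(N * N) :=
  \matrix_(i, j) sixj_entry hh X Y Z (mxtens_unindex i).1 (mxtens_unindex i).2
                                     (mxtens_unindex j).1 (mxtens_unindex j).2.

Lemma R6j_sixj nroot ar yr am ym an yn :
  exists hh X Y Z, R6j N nroot ar yr am ym an yn = sixj_mx hh X Y Z.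
Proof. by do 4 eexists. Qed.

Lemma odd_Phalf : odd N -> N%:Z = 2 * (Phalf N).+1%:Z - 1.
Proof.
move=> oddN; rewrite /Phalf -[in LHS](odd_double_half N) oddN -muln2 -addn1.
by rewrite !PoszD PoszM /=; ring.
Qed.

Lemma omega_phase_mod (K : C) (x1 x2 k t s : int) :
  x1 - x2 = t * k + s * N -> K * om ^ x1 * dl k = K * om ^ x2 * dl k.
Proof.
move=> Ex; rewrite deltaNE; case: ifP => [Nk|]; last by rewrite !mulr0.
by rewrite (omega_exprz_mod x1 x2) // Ex rpredD ?dvdz_mull ?dvdzz.
Qed.

Section SixjCommutation.
Variables hh X Y Z : C.
Local Notation S := (sixj_mx hh X Y Z).
Local Notation F := (sixj_entry hh X Y Z).
Local Notation Q := (Phalf N).+1%:Z.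

Lemma sixj_tens_entries : tens_entries S F.
Proof. by move=> a b c d; rewrite mxE !mxtens_indexK. Qed.

Lemma sixj_entry_periodic : periodic4 F.
Proof.
rewrite /sixj_entry /wfun2; split=> [b c d|a c d|a b d|a b c] x y xy.
- rewrite !omega_halfE (omega_exprz_mod (x * d) (y * d)) ?(wfun_mod _ _ _ (c - x) (c - y)).
  + congr (_ * _ * (_ * _) * _); apply: omega_exprz_mod.
    by rewrite (_ : Q * x ^+ 2 - Q * y ^+ 2 = (x - y) * (Q * (x + y))) ?dvdz_mulr //; ring.
  + by rewrite (_ : c - x - (c - y) = - (x - y)) ?rpredN //; ring.
  + by rewrite (_ : x * d - y * d = (x - y) * d) ?dvdz_mulr //; ring.
- rewrite (deltaN_mod (c + d - x) (c + d - y)) //.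
  by rewrite (_ : c + d - x - (c + d - y) = - (x - y)) ?rpredN //; ring.
- rewrite (deltaN_mod (x + d - b) (y + d - b)) ?(wfun_mod _ _ _ (x - a) (y - a)) //.
  + by rewrite (_ : x - a - (y - a) = x - y) //; ring.
  + by rewrite (_ : x + d - b - (y + d - b) = x - y) //; ring.
- rewrite (deltaN_mod (c + x - b) (c + y - b)) ?(omega_exprz_mod (a * x) (a * y)) //.
  + by rewrite (_ : a * x - a * y = (x - y) * a) ?dvdz_mulr //; ring.
  + by rewrite (_ : c + x - b - (c + y - b) = x - y) //; ring.
Qed.

Lemma sixj_Z1Z2 :
  S *m ((Zmat R N *t 1%:M) *m (1%:M *t Zmat R N)) = (1%:M *t Zmat R N) *m S.
Proof.
rewrite tensmx_mul mulmx1 mul1mx; apply: tens_matrixP => a b c d.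
rewrite (mulmx_tens_shift sixj_tens_entries sixj_entry_periodic Zmat_shift Zmat_shift).
rewrite (mul_tens_shift_mx sixj_tens_entries sixj_entry_periodic scalar1_shift Zmat_shift).
rewrite /sixj_entry /wfun2 !omega_halfE ?subr0 ?addr0 ?mulr1.
set W := wfun _ _ _ _ _.
transitivity (hh * W * om ^ (a%:Z * d%:Z + Q * a%:Z ^+ 2 + c%:Z + d%:Z)
              * dl (c%:Z + d%:Z - b%:Z)).
  by rewrite !expfzDr ?omega_neq0 //; ring.
rewrite (omega_phase_mod _ _ (b%:Z + a%:Z * d%:Z + Q * a%:Z ^+ 2) _ 1 0); last by ring.
by rewrite !expfzDr ?omega_neq0 //; ring.
Qed.

Lemma sixj_Z1Y2 :
  S *m ((Zmat R N *t 1%:M) *m (1%:M *t Ymat R N))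
  = ((Zmat R N *t 1%:M) *m (1%:M *t Ymat R N)) *m S.
Proof.
rewrite tensmx_mul mulmx1 mul1mx; apply: tens_matrixP => a b c d.
rewrite (mulmx_tens_shift sixj_tens_entries sixj_entry_periodic Zmat_shift Ymat_shift).
rewrite (mul_tens_shift_mx sixj_tens_entries sixj_entry_periodic Zmat_shift Ymat_shift).
rewrite /sixj_entry /wfun2 !omega_halfE ?subr0 ?addr0 ?mulr1.
have -> : c%:Z + (d%:Z + 1) - b%:Z = c%:Z + d%:Z + 1 - b%:Z by ring.
have -> : c%:Z + d%:Z - (b%:Z - 1) = c%:Z + d%:Z + 1 - b%:Z by ring.
set W := wfun _ _ _ _ _.
transitivity (hh * W * om ^ (a%:Z * (d%:Z + 1) + Q * a%:Z ^+ 2 + c%:Z + Q + d%:Z)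
              * dl (c%:Z + d%:Z + 1 - b%:Z)).
  by rewrite !expfzDr ?omega_neq0 //; ring.
rewrite (omega_phase_mod _ _ (a%:Z + Q + (b%:Z - 1) + a%:Z * d%:Z + Q * a%:Z ^+ 2) _ 1 0).
  by rewrite !expfzDr ?omega_neq0 //; ring.
by ring.
Qed.

Lemma sixj_Y1 : odd N ->
  S *m (Ymat R N *t 1%:M) = ((Ymat R N *t 1%:M) *m (1%:M *t Ymat R N)) *m S.
Proof.
move=> oddN; rewrite tensmx_mul mulmx1 mul1mx; apply: tens_matrixP => a b c d.
rewrite (mulmx_tens_shift sixj_tens_entries sixj_entry_periodic Ymat_shift scalar1_shift).
rewrite (mul_tens_shift_mx sixj_tens_entries sixj_entry_periodic Ymat_shift Ymat_shift).
rewrite /sixj_entry /wfun2 !omega_halfE ?subr0 ?addr0 ?mulr1.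
have -> : c%:Z - (a%:Z - 1) = c%:Z + 1 - a%:Z by ring.
have -> : c%:Z + d%:Z - (b%:Z - 1) = c%:Z + d%:Z + 1 - b%:Z by ring.
have -> : c%:Z + 1 + d%:Z - b%:Z = c%:Z + d%:Z + 1 - b%:Z by ring.
set W := wfun _ _ _ _ _.
transitivity (hh * W * om ^ (a%:Z * d%:Z + Q * a%:Z ^+ 2 + Q + c%:Z)
              * dl (c%:Z + d%:Z + 1 - b%:Z)).
  by rewrite !expfzDr ?omega_neq0 //; ring.
rewrite (omega_phase_mod _ _ (Q + (a%:Z - 1) + Q + (b%:Z - 1) + (a%:Z - 1) * d%:Z
                              + Q * (a%:Z - 1) ^+ 2) _ 1 (a%:Z - 1)).
  by rewrite !expfzDr ?omega_neq0 //; ring.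
by rewrite odd_Phalf //; ring.
Qed.

End SixjCommutation.

End Sixj.

Theorem lemma6p10 (R : realType) (N : nat) (nroot : R[i] -> R[i])
    (ar yr am ym an yn : R[i]) :
  (3 <= N)%N -> odd N ->
  (forall u : R[i], nroot u ^+ N = u) ->
  ar != 0 -> yr != 0 -> am != 0 -> ym != 0 -> an != 0 -> yn != 0 ->
  regular_triple N ar yr am ym an yn ->
  standing_convention N nroot ar yr am ym an yn ->
  let Rm := R6j N nroot ar yr am ym an yn in
  let Z1 := Zmat R N *t (1%:M : 'M[R[i]]_N) in
  let Z2 := (1%:M : 'M[R[i]]_N) *t Zmat R N in
  let Y1 := Ymat R N *t (1%:M : 'M[R[i]]_N) in
  let Y2 := (1%:M : 'M[R[i]]_N) *t Ymat R N in
  [/\ Rm *m (Z1 *m Y2) = (Z1 *m Y2) *m Rm,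
      Rm *m Y1 = (Y1 *m Y2) *m Rm
    & Rm *m (Z1 *m Z2) = Z2 *m Rm].
Proof.
move=> N_ge3 oddN _ _ _ _ _ _ _ _ _ Rm Z1 Z2 Y1 Y2.
have N_gt0 : (0 < N)%N by apply: leq_trans N_ge3.
have [hh [X [Y [Z R6jE]]]] := R6j_sixj _ N nroot ar yr am ym an yn.
rewrite /Rm R6jE; split.
- exact: (sixj_Z1Y2 _ _ N_gt0).
- exact: (sixj_Y1 _ _ N_gt0).
- exact: (sixj_Z1Z2 _ _ N_gt0).
Qed.
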